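(* If $T:\mathrm{PSym}(3)\to\mathrm{Sym}(3)$ satisfies Axioms (A0.1), (A0.2), (A0.3) and (A3), then it also satisfies Axioms (A1) and (A2).
   Context: $\mathrm{Sym}(3)$: real symmetric $3\times3$ matrices; $\mathrm{PSym}(3)$: symmetric positive definite ones; $\mathbb 1$: identity; $\mathrm{O}(3)$: orthogonal group; coaxial means commuting. Axiom (A0.1): $T$ continuous. Axiom (A0.2): $T(U)=0$ iff $U=\mathbb 1$. Axiom (A0.3): $T(Q^TUQ)=Q^TT(U)Q$ for all $Q\in\mathrm O(3)$, $U\in\mathrm{PSym}(3)$. Axiom (A1): for every $\alpha>0$ there is $s\in\mathbb R$ such that for all $U\in\mathrm{PSym}(3)$: $U=\mathrm{diag}(\alpha,\alpha^{-1},1)$ iff $T(U)=\mathrm{diag}(s,-s,0)$. Axiom (A2): for every $\lambda>0$ there is $a\in\mathbb R$ such that for all $U\in\mathrm{PSym}(3)$: $U=\lambda\mathbb 1$ iff $T(U)=a\mathbb 1$. Axiom (A3): $T(U_1U_2)=T(U_1)+T(U_2)$ for all coaxial $U_1,U_2\in\mathrm{PSym}(3)$. *)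

From Stdlib Require Import Reals.
Open Scope R_scope.

Inductive idx : Type := I0 | I1 | I2.

Definition Mat3 : Type := idx -> idx -> R.

Definition sum3 (f : idx -> R) : R := f I0 + f I1 + f I2.

Definition mmul (A B : Mat3) : Mat3 := fun i j => sum3 (fun k => A i k * B k j).
Definition madd (A B : Mat3) : Mat3 := fun i j => A i j + B i j.
Definition mtr (A : Mat3) : Mat3 := fun i j => A j i.
Definition mscal (a : R) : Mat3 := fun i j => match i, j with
  | I0, I0 | I1, I1 | I2, I2 => a | _, _ => 0 end.
Definition mid : Mat3 := mscal 1.
Definition mzero : Mat3 := fun _ _ => 0.
Definition mdiag (a b c : R) : Mat3 := fun i j => match i, j with
  | I0, I0 => a | I1, I1 => b | I2, I2 => c | _, _ => 0 end.

Definition is_sym (A : Mat3) : Prop := forall i j, A i j = A j i.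
Definition is_psym (A : Mat3) : Prop :=
  is_sym A /\
  forall x : idx -> R, (exists i, x i <> 0) ->
    sum3 (fun i => sum3 (fun j => x i * A i j * x j)) > 0.
Definition is_orth (Q : Mat3) : Prop := mmul (mtr Q) Q = mid.
(* coaxial = commuting *)
Definition coaxial (A B : Mat3) : Prop := mmul A B = mmul B A.

Definition mdist (A B : Mat3) : R :=
  sqrt (sum3 (fun i => sum3 (fun j => (A i j - B i j)^2))).

Definition cont_on_psym (T : Mat3 -> Mat3) : Prop :=
  forall U, is_psym U -> forall eps, eps > 0 -> exists delta, delta > 0 /\
    forall V, is_psym V -> mdist U V < delta -> mdist (T U) (T V) < eps.

Definition maps_into_sym (T : Mat3 -> Mat3) : Prop :=
  forall U, is_psym U -> is_sym (T U).

Definition Ax0_1 (T : Mat3 -> Mat3) : Prop := cont_on_psym T.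
Definition Ax0_2 (T : Mat3 -> Mat3) : Prop :=
  forall U, is_psym U -> (T U = mzero <-> U = mid).
Definition Ax0_3 (T : Mat3 -> Mat3) : Prop :=
  forall Q U, is_orth Q -> is_psym U ->
    T (mmul (mmul (mtr Q) U) Q) = mmul (mmul (mtr Q) (T U)) Q.
Definition Ax1 (T : Mat3 -> Mat3) : Prop :=
  forall alpha, alpha > 0 -> exists s : R, forall U, is_psym U ->
    (U = mdiag alpha (/ alpha) 1 <-> T U = mdiag s (- s) 0).
Definition Ax2 (T : Mat3 -> Mat3) : Prop :=
  forall lam, lam > 0 -> exists a : R, forall U, is_psym U ->
    (U = mscal lam <-> T U = mscal a).
Definition Ax3 (T : Mat3 -> Mat3) : Prop :=
  forall U1 U2, is_psym U1 -> is_psym U2 -> coaxial U1 U2 ->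
    T (mmul U1 U2) = madd (T U1) (T U2).

(* Axis symmetries: [l 1] and [D = diag(a, 1/a, 1)] are fixed by conjugation with the sign
   flips, so by (A0.3) their images under [T] are diagonal; [l 1] is also fixed by the axis
   swaps, so [T (l 1)] is scalar, while swapping the first two axes sends [D] to [D^-1], whose
   image is [- T D] by (A3) and [T 1 = 0], so [T D = diag(s, -s, 0)].
   For the converses, (A3) and (A0.2) show that [T (W V) = T V] forces [W = 1] when [W] and
   [V] commute, so it suffices that [U] commutes with [l 1] (always) or with [D].  The latter
   holds because [U] is diagonal: the Householder reflection in an eigenvector of [U] fixes [U],
   hence commutes with [T U = diag(s, -s, 0)]; for [s <> 0] these entries are distinct, which
   puts every eigenvector of [U] on a coordinate axis, and a symmetric matrix all of whose
   eigenvectors are axial is diagonal. *)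

From Stdlib Require Import Reals Lra Psatz Classical FunctionalExtensionality.
Open Scope R_scope.

Ltac mat_ext :=
  apply functional_extensionality; intros [];
  apply functional_extensionality; intros [].
Ltac mat_unfold := unfold mmul, mtr, madd, mdiag, mscal, mid, mzero, sum3 in *; simpl in *.

Lemma idx_eq_dec (i j : idx) : {i = j} + {i <> j}.
Proof. decide equality. Defined.

Definition mconj (Q A : Mat3) : Mat3 := mmul (mmul (mtr Q) A) Q.

Lemma mmul_assoc A B C : mmul (mmul A B) C = mmul A (mmul B C).
Proof. mat_ext; mat_unfold; ring. Qed.

Lemma mmul_1l A : mmul mid A = A.
Proof. mat_ext; mat_unfold; ring. Qed.

Lemma mmul_1r A : mmul A mid = A.
Proof. mat_ext; mat_unfold; ring. Qed.

Lemma mid_mdiag : mid = mdiag 1 1 1.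
Proof. mat_ext; reflexivity. Qed.

Lemma mscal_mdiag l : mscal l = mdiag l l l.
Proof. mat_ext; reflexivity. Qed.

Lemma mmul_mdiag a b c d e f : mmul (mdiag a b c) (mdiag d e f) = mdiag (a * d) (b * e) (c * f).
Proof. mat_ext; mat_unfold; ring. Qed.

Lemma coaxial_mdiag a b c d e f : coaxial (mdiag a b c) (mdiag d e f).
Proof. unfold coaxial; rewrite !mmul_mdiag; f_equal; ring. Qed.

Lemma coaxial_mscal_r A l : coaxial A (mscal l).
Proof. unfold coaxial; mat_ext; mat_unfold; ring. Qed.

Lemma mdiag_inj a b c d e f : mdiag a b c = mdiag d e f -> a = d /\ b = e /\ c = f.
Proof.
  intro E.
  repeat split; [apply (f_equal (fun M => M I0 I0) E) | apply (f_equal (fun M => M I1 I1) E)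
                | apply (f_equal (fun M => M I2 I2) E)].
Qed.

Lemma mdiag_of_offdiag_zero A :
  (forall i j, i <> j -> A i j = 0) -> A = mdiag (A I0 I0) (A I1 I1) (A I2 I2).
Proof. intro H. mat_ext; try reflexivity; apply H; discriminate. Qed.

Lemma psym_mdiag a b c : 0 < a -> 0 < b -> 0 < c -> is_psym (mdiag a b c).
Proof.
  intros ha hb hc. split; [intros [] []; reflexivity |].
  intros x [i Hi]. unfold sum3, mdiag; simpl.
  assert (0 <= x I0 * x I0) by nra. assert (0 <= x I1 * x I1) by nra.
  assert (0 <= x I2 * x I2) by nra.
  destruct i; [assert (0 < x I0 * x I0) | assert (0 < x I1 * x I1) | assert (0 < x I2 * x I2)];
    nra.
Qed.

Lemma psym_mid : is_psym mid.
Proof. rewrite mid_mdiag; apply psym_mdiag; lra. Qed.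

Lemma psym_diag_pos U i : is_psym U -> 0 < U i i.
Proof.
  intros [_ Hpos].
  assert (Hnz : exists k, (if idx_eq_dec k i then 1 else 0) <> 0)
    by (exists i; destruct idx_eq_dec; [lra | congruence]).
  specialize (Hpos _ Hnz). destruct i; unfold sum3 in Hpos; simpl in Hpos; lra.
Qed.

Lemma psym_mmul_mscal U c : is_psym U -> 0 < c -> is_psym (mmul U (mscal c)).
Proof.
  intros [Hs Hpos] hc. split.
  - intros i j; destruct i, j; mat_unfold; rewrite ?(Hs I0 I1), ?(Hs I0 I2), ?(Hs I1 I2); ring.
  - intros x hx. specialize (Hpos x hx). mat_unfold. nra.
Qed.
Definition nonzero (v : idx -> R) : Prop := exists i, v i <> 0.
Definition vec3 (x y z : R) : idx -> R := fun k => match k with I0 => x | I1 => y | I2 => z end.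
Definition dot (u w : idx -> R) : R := sum3 (fun k => u k * w k).
Definition cross (u w : idx -> R) : idx -> R :=
  vec3 (u I1 * w I2 - u I2 * w I1) (u I2 * w I0 - u I0 * w I2) (u I0 * w I1 - u I1 * w I0).
Definition mvec (A : Mat3) (v : idx -> R) : idx -> R := fun i => dot (A i) v.
Definition det3 (A : Mat3) : R := dot (A I0) (cross (A I1) (A I2)).
Definition eigvec (A : Mat3) (l : R) (v : idx -> R) : Prop :=
  nonzero v /\ forall i, mvec A v i = l * v i.

Ltac vec_unfold := unfold mvec, det3, dot, cross, vec3, sum3 in *; simpl in *.

Lemma not_nonzero v : ~ nonzero v -> forall i, v i = 0.
Proof. intros H i. apply NNPP. intro Hi. apply H. exists i. exact Hi. Qed.

Lemma cubic_has_root c2 c1 c0 : exists x, x * x * x + c2 * x * x + c1 * x + c0 = 0.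
Proof.
  assert (hc2 : - Rabs c2 <= c2 <= Rabs c2) by (split_Rabs; lra).
  assert (hc1 : - Rabs c1 <= c1 <= Rabs c1) by (split_Rabs; lra).
  assert (hc0 : - Rabs c0 <= c0 <= Rabs c0) by (split_Rabs; lra).
  pose proof (Rabs_pos c2). pose proof (Rabs_pos c1). pose proof (Rabs_pos c0).
  remember (1 + Rabs c2 + Rabs c1 + Rabs c0) as K eqn:HK.
  assert (hK : 1 <= K) by lra.
  (* at [x = -K] and [x = K] the cubic term dominates the others *)
  assert (Hdom : Rabs c2 * K * K + Rabs c1 * K + Rabs c0 < K * K * K).
  { assert (0 <= Rabs c1 * K) by nra. assert (Rabs c1 * K <= Rabs c1 * K * K) by nra.
    assert (K <= K * K) by nra. assert (Rabs c0 <= Rabs c0 * K * K) by nra.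
    replace (K * K * K) with ((1 + Rabs c2 + Rabs c1 + Rabs c0) * K * K) by (rewrite <- HK; ring).
    nra. }
  set (p := fun x => x * x * x + c2 * x * x + c1 * x + c0).
  assert (Hneg : p (- K) < 0).
  { unfold p. assert (c2 * K * K <= Rabs c2 * K * K) by (apply Rmult_le_compat_r; nra). nra. }
  assert (Hpos : 0 < p K).
  { unfold p. assert (- Rabs c2 * K * K <= c2 * K * K) by (apply Rmult_le_compat_r; nra). nra. }
  destruct (IVT p (- K) K) as [x [_ Hx]]; [unfold p; reg | lra | lra | lra |].
  exists x; exact Hx.
Qed.

Lemma char_poly_root A : exists l, det3 (fun i j => A i j - l * mid i j) = 0.
Proof.
  destruct (cubic_has_root (- (A I0 I0 + A I1 I1 + A I2 I2))
    (A I0 I0 * A I1 I1 - A I0 I1 * A I1 I0 + A I0 I0 * A I2 I2 - A I0 I2 * A I2 I0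
     + A I1 I1 * A I2 I2 - A I1 I2 * A I2 I1) (- det3 A)) as [l Hl].
  exists l. vec_unfold. unfold mid, mscal. lra.
Qed.

Lemma kernel_of_parallel_rows A :
  (forall i j k, cross (A i) (A j) k = 0) -> exists v, nonzero v /\ forall i, mvec A v i = 0.
Proof.
  intro Hpar.
  destruct (classic (exists k, nonzero (A k))) as [[k [i Hi]] | Hzero].
  - (* every row is parallel to the nonzero row [A k], so a vector orthogonal to [A k] works *)
    destruct (classic (A k I0 <> 0 \/ A k I1 <> 0)) as [H01 | H01].
    + exists (vec3 (A k I1) (- A k I0) 0). split.
      * destruct H01; [exists I1 | exists I0]; simpl; lra.
      * intro j. pose proof (Hpar k j I2). vec_unfold. lra.
    + exists (vec3 0 (A k I2) (- A k I1)). split.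
      * exists I1. simpl. destruct i; tauto.
      * intro j. pose proof (Hpar k j I0). vec_unfold. lra.
  - exists (vec3 1 0 0). split; [exists I0; simpl; lra |].
    intro j. assert (Hj := not_nonzero (A j) (fun H => Hzero (ex_intro _ j H))).
    vec_unfold. rewrite !Hj. ring.
Qed.

Lemma singular_kernel A : det3 A = 0 -> exists v, nonzero v /\ forall i, mvec A v i = 0.
Proof.
  intro Hdet.
  (* a nonzero cross product of two rows is orthogonal to all three rows *)
  destruct (classic (nonzero (cross (A I1) (A I2)))) as [H12 | H12].
  { exists (cross (A I1) (A I2)). split; [exact H12 |]. intros []; vec_unfold; lra. }
  destruct (classic (nonzero (cross (A I2) (A I0)))) as [H20 | H20].
  { exists (cross (A I2) (A I0)). split; [exact H20 |]. intros []; vec_unfold; lra. }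
  destruct (classic (nonzero (cross (A I0) (A I1)))) as [H01 | H01].
  { exists (cross (A I0) (A I1)). split; [exact H01 |]. intros []; vec_unfold; lra. }
  apply kernel_of_parallel_rows.
  pose proof (not_nonzero _ H12) as Z12. pose proof (not_nonzero _ H20) as Z20.
  pose proof (not_nonzero _ H01) as Z01.
  intros i j k. specialize (Z12 k). specialize (Z20 k). specialize (Z01 k).
  destruct i, j, k; vec_unfold; lra.
Qed.

Lemma eigvec_exists A : exists l v, eigvec A l v.
Proof.
  destruct (char_poly_root A) as [l Hl].
  destruct (singular_kernel _ Hl) as [v [Hv Hker]].
  exists l, v. split; [exact Hv |]. intro i. specialize (Hker i).
  destruct i; vec_unfold; unfold mid, mscal in Hker; lra.
Qed.

Lemma sym2_eigvec_full_support a b c :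
  b <> 0 -> exists m x y, x <> 0 /\ y <> 0 /\ a * x + b * y = m * x /\ b * x + c * y = m * y.
Proof.
  intro hb. set (t := sqrt (((a - c) / 2) ^ 2 + b ^ 2)).
  assert (ht : t * t = ((a - c) / 2) ^ 2 + b ^ 2)
    by (apply sqrt_sqrt; apply Rplus_le_le_0_compat; apply pow2_ge_0).
  set (m := (a + c) / 2 + t).
  assert (hm : b * b = (m - a) * (m - c)) by (unfold m; nra).
  exists m, b, (m - a). repeat split; [exact hb | | ring | nra].
  intro E. rewrite E in hm. apply hb. nra.
Qed.

Definition on_axis (v : idx -> R) : Prop := forall i j, i <> j -> v i * v j = 0.

Section AxisEigenvectors.

Variable A : Mat3.
Hypothesis A_sym : is_sym A.
Hypothesis A_axis : forall l v, eigvec A l v -> on_axis v.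

Lemma sym_block_offdiag_zero i j k :
  i <> j -> i <> k -> j <> k -> A j i = 0 -> A k i = 0 -> A j k = 0.
Proof.
  intros hij hik hjk hji hki.
  destruct (Req_dec (A j k) 0) as [| hb]; [assumption | exfalso].
  destruct (sym2_eigvec_full_support (A j j) (A j k) (A k k) hb)
    as [m [x [y [hx [hy [e1 e2]]]]]].
  set (w := fun n => if idx_eq_dec n j then x else if idx_eq_dec n k then y else 0).
  assert (hkj : A k j = A j k) by apply A_sym.
  assert (hij' : A i j = 0) by (rewrite A_sym; exact hji).
  assert (hik' : A i k = 0) by (rewrite A_sym; exact hki).
  assert (Hw : eigvec A m w).
  { split.
    - exists j. unfold w. destruct idx_eq_dec; congruence.
    - intro n. unfold w.
      destruct i, j, k; try congruence; destruct n; vec_unfold;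
        rewrite ?hji, ?hki, ?hij', ?hik', ?hkj; lra. }
  specialize (A_axis _ _ Hw j k hjk). unfold w in A_axis.
  destruct (idx_eq_dec j j), (idx_eq_dec k j), (idx_eq_dec k k); try congruence.
  apply hx. destruct (Rmult_integral _ _ A_axis); [assumption | contradiction].
Qed.

Lemma sym_offdiag_zero_of_axis_eigvecs i j : i <> j -> A i j = 0.
Proof.
  destruct (eigvec_exists A) as [l [v Hv]].
  pose proof (A_axis _ _ Hv) as Hax. destruct Hv as [[k Hk] Hev].
  assert (Hsupp : forall n, n <> k -> v n = 0).
  { intros n hn. destruct (Rmult_integral _ _ (Hax k n (not_eq_sym hn))); [contradiction | assumption]. }
  assert (Hcol : forall n, n <> k -> A n k = 0).
  { intros n hn. specialize (Hev n). rewrite (Hsupp n hn), Rmult_0_r in Hev.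
    assert (Hrow : mvec A v n = A n k * v k)
      by (destruct k; vec_unfold; rewrite ?(Hsupp I0), ?(Hsupp I1), ?(Hsupp I2) by discriminate; ring).
    rewrite Hrow in Hev. destruct (Rmult_integral _ _ Hev); [assumption | contradiction]. }
  intro hij.
  destruct (idx_eq_dec j k) as [-> | hjk]; [exact (Hcol i hij) |].
  destruct (idx_eq_dec i k) as [-> | hik]; [rewrite A_sym; exact (Hcol j hjk) |].
  apply (sym_block_offdiag_zero k); auto.
Qed.

End AxisEigenvectors.

Definition householder (v : idx -> R) : Mat3 := fun i j => mid i j - 2 / dot v v * (v i * v j).

Lemma dot_self_pos v : nonzero v -> 0 < dot v v.
Proof.
  intros [i Hi]. vec_unfold.
  assert (0 <= v I0 * v I0) by nra. assert (0 <= v I1 * v I1) by nra.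
  assert (0 <= v I2 * v I2) by nra.
  destruct i; [assert (0 < v I0 * v I0) | assert (0 < v I1 * v I1) | assert (0 < v I2 * v I2)];
    nra.
Qed.

Section Householder.

Variable v : idx -> R.
Hypothesis v_nonzero : nonzero v.

Lemma householder_sym : mtr (householder v) = householder v.
Proof. mat_ext; unfold householder, mtr; mat_unfold; ring. Qed.

Lemma householder_involutive : mmul (householder v) (householder v) = mid.
Proof.
  pose proof (dot_self_pos v v_nonzero) as hn. unfold dot, sum3 in hn.
  mat_ext; unfold householder, dot; mat_unfold; field; lra.
Qed.

Lemma householder_orth : is_orth (householder v).
Proof. unfold is_orth. rewrite householder_sym. exact householder_involutive. Qed.

Lemma householder_fixes_eigvec A l :
  is_sym A -> (forall i, mvec A v i = l * v i) -> mconj (householder v) A = A.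
Proof.
  intros Hs Hev.
  (* both products equal [A - 2/(v.v) l v v^T], using [Av = l v] and [v^T A = l v^T] *)
  assert (Hcomm : mmul A (householder v) = mmul (householder v) A).
  { apply functional_extensionality; intro i; apply functional_extensionality; intro j.
    transitivity (A i j - 2 / dot v v * (mvec A v i * v j)).
    { destruct i, j; unfold householder; vec_unfold; mat_unfold; ring. }
    transitivity (A i j - 2 / dot v v * (v i * mvec A v j)).
    { rewrite !Hev. ring. }
    destruct i, j; unfold householder; vec_unfold; mat_unfold;
      rewrite ?(Hs I0 I1), ?(Hs I0 I2), ?(Hs I1 I2); ring. }
  unfold mconj. rewrite householder_sym, mmul_assoc, Hcomm, <- mmul_assoc,
    householder_involutive, mmul_1l. reflexivity.
Qed.

End Householder.

Lemma offdiag_zero_of_commute_mdiag a b c M :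
  a <> b -> a <> c -> b <> c -> mmul (mdiag a b c) M = mmul M (mdiag a b c) ->
  forall i j, i <> j -> M i j = 0.
Proof.
  intros hab hac hbc E i j hij.
  pose proof (f_equal (fun N => N i j) E) as Eij.
  destruct i, j; try congruence; mat_unfold;
    [ assert ((a - b) * M I0 I1 = 0) by lra | assert ((a - c) * M I0 I2 = 0) by lra
    | assert ((b - a) * M I1 I0 = 0) by lra | assert ((b - c) * M I1 I2 = 0) by lra
    | assert ((c - a) * M I2 I0 = 0) by lra | assert ((c - b) * M I2 I1 = 0) by lra ];
    match goal with H : ?d * _ = 0 |- _ =>
      destruct (Rmult_integral _ _ H) as [Hd |]; [exfalso; lra | assumption] end.
Qed.

Lemma T_conj_fixed T Q U :
  Ax0_3 T -> is_orth Q -> is_psym U -> mconj Q U = U -> T U = mconj Q (T U).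
Proof. intros H03 hQ hU E. unfold mconj in *. rewrite <- (H03 Q U hQ hU), E. reflexivity. Qed.

Lemma T_value_mdiag_distinct_diagonal T U a b c :
  Ax0_3 T -> is_psym U -> T U = mdiag a b c -> a <> b -> a <> c -> b <> c ->
  U = mdiag (U I0 I0) (U I1 I1) (U I2 I2).
Proof.
  intros H03 hU HT hab hac hbc. apply mdiag_of_offdiag_zero.
  apply sym_offdiag_zero_of_axis_eigvecs; [apply hU |].
  intros l v [Hv Hev] i j hij.
  assert (Hfix := T_conj_fixed T _ U H03 (householder_orth v Hv) hU
                    (householder_fixes_eigvec v Hv U l (proj1 hU) Hev)).
  rewrite HT in Hfix. unfold mconj in Hfix. rewrite householder_sym in Hfix.
  (* [D = H D H] with [H] an involution, hence [H D = D H] *)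
  assert (Hcomm : mmul (mdiag a b c) (householder v) = mmul (householder v) (mdiag a b c)).
  { rewrite Hfix at 1.
    rewrite mmul_assoc, householder_involutive, mmul_1r by exact Hv. reflexivity. }
  pose proof (offdiag_zero_of_commute_mdiag a b c _ hab hac hbc Hcomm i j hij) as Hij.
  pose proof (dot_self_pos v Hv) as hn.
  assert (Hmid : mid i j = 0) by (destruct i, j; try congruence; reflexivity).
  unfold householder in Hij. rewrite Hmid in Hij.
  assert (Hc : 2 / dot v v <> 0) by (unfold Rdiv; apply Rmult_integral_contrapositive; split;
    [lra | apply Rinv_neq_0_compat; lra]).
  destruct (Rmult_integral (2 / dot v v) (v i * v j)) as [|]; [lra | contradiction | assumption].
Qed.

Definition swap01 : Mat3 := fun i j => match i, j with
  | I0, I1 | I1, I0 | I2, I2 => 1 | _, _ => 0 end.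
Definition swap12 : Mat3 := fun i j => match i, j with
  | I0, I0 | I1, I2 | I2, I1 => 1 | _, _ => 0 end.

Lemma swap01_orth : is_orth swap01.
Proof. unfold is_orth, swap01; mat_ext; mat_unfold; ring. Qed.

Lemma swap12_orth : is_orth swap12.
Proof. unfold is_orth, swap12; mat_ext; mat_unfold; ring. Qed.

Lemma mconj_swap01_mdiag a b c : mconj swap01 (mdiag a b c) = mdiag b a c.
Proof. unfold mconj, swap01; mat_ext; mat_unfold; ring. Qed.

Lemma mconj_swap12_mdiag a b c : mconj swap12 (mdiag a b c) = mdiag a c b.
Proof. unfold mconj, swap12; mat_ext; mat_unfold; ring. Qed.

Lemma mdiag_orth a b c : a * a = 1 -> b * b = 1 -> c * c = 1 -> is_orth (mdiag a b c).
Proof. intros. unfold is_orth; rewrite mid_mdiag; mat_ext; mat_unfold; lra. Qed.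

Lemma mconj_sign_mdiag a b c d e f :
  a * a = 1 -> b * b = 1 -> c * c = 1 -> mconj (mdiag a b c) (mdiag d e f) = mdiag d e f.
Proof.
  intros ha hb hc. unfold mconj.
  replace (mtr (mdiag a b c)) with (mdiag a b c) by (mat_ext; reflexivity).
  rewrite !mmul_mdiag.
  f_equal; [rewrite Rmult_comm, <- Rmult_assoc, ha | rewrite Rmult_comm, <- Rmult_assoc, hb
           | rewrite Rmult_comm, <- Rmult_assoc, hc]; ring.
Qed.

Lemma mdiag_of_sign_flip_invariant X :
  mconj (mdiag (-1) 1 1) X = X -> mconj (mdiag 1 (-1) 1) X = X ->
  X = mdiag (X I0 I0) (X I1 I1) (X I2 I2).
Proof.
  intros E0 E1. apply mdiag_of_offdiag_zero. intros i j hij.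
  pose proof (f_equal (fun M => M i j) E0). pose proof (f_equal (fun M => M i j) E1).
  destruct i, j; try congruence; unfold mconj in *; mat_unfold; lra.
Qed.

Lemma T_mdiag_diagonal T a b c :
  Ax0_3 T -> 0 < a -> 0 < b -> 0 < c -> exists x y z, T (mdiag a b c) = mdiag x y z.
Proof.
  intros H03 ha hb hc.
  assert (hU : is_psym (mdiag a b c)) by (apply psym_mdiag; assumption).
  exists (T (mdiag a b c) I0 I0), (T (mdiag a b c) I1 I1), (T (mdiag a b c) I2 I2).
  apply mdiag_of_sign_flip_invariant; symmetry; apply T_conj_fixed; try assumption;
    [apply mdiag_orth | apply mconj_sign_mdiag | apply mdiag_orth | apply mconj_sign_mdiag]; lra.
Qed.

Lemma T_mid T : Ax0_2 T -> T mid = mzero.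
Proof. intro H02. apply H02; [exact psym_mid | reflexivity]. Qed.

Lemma T_cancel T W V :
  Ax0_2 T -> Ax3 T -> is_psym W -> is_psym V -> coaxial W V -> T (mmul W V) = T V -> W = mid.
Proof.
  intros H02 H3 hW hV hWV E. rewrite H3 in E by assumption. apply H02; [exact hW |].
  apply functional_extensionality; intro i; apply functional_extensionality; intro j.
  pose proof (f_equal (fun M => M i j) E) as Eij. unfold madd, mzero in *. lra.
Qed.

Lemma Ax2_of_axioms T : Ax0_2 T -> Ax0_3 T -> Ax3 T -> Ax2 T.
Proof.
  intros H02 H03 H3 l hl.
  assert (hL : is_psym (mscal l)) by (rewrite mscal_mdiag; apply psym_mdiag; lra).
  (* [T (l 1)] is diagonal, and invariant under swapping two axes *)
  destruct (T_mdiag_diagonal T l l l H03 hl hl hl) as [x [y [z HT]]].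
  rewrite <- mscal_mdiag in HT.
  assert (Hxy : mdiag x y z = mdiag y x z).
  { rewrite <- HT, <- mconj_swap01_mdiag, <- HT. apply T_conj_fixed; try assumption.
    - exact swap01_orth.
    - rewrite mscal_mdiag. apply mconj_swap01_mdiag. }
  assert (Hyz : mdiag x y z = mdiag x z y).
  { rewrite <- HT, <- mconj_swap12_mdiag, <- HT. apply T_conj_fixed; try assumption.
    - exact swap12_orth.
    - rewrite mscal_mdiag. apply mconj_swap12_mdiag. }
  apply mdiag_inj in Hxy as [-> _]. apply mdiag_inj in Hyz as [_ [-> _]].
  exists z. intros U hU. split.
  - intros ->. rewrite HT. symmetry. apply mscal_mdiag.
  - intro HU.
    assert (hW : is_psym (mmul U (mscal (/ l)))) by (apply psym_mmul_mscal; [exact hU | now apply Rinv_0_lt_compat]).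
    assert (EW : mmul (mmul U (mscal (/ l))) (mscal l) = U) by (mat_ext; mat_unfold; field; lra).
    assert (W1 : mmul U (mscal (/ l)) = mid).
    { apply (T_cancel T _ (mscal l)); try assumption; [apply coaxial_mscal_r |].
      rewrite EW, HU, HT. apply mscal_mdiag. }
    rewrite <- EW, W1, mmul_1l. reflexivity.
Qed.

Lemma T_stretch T al :
  Ax0_2 T -> Ax0_3 T -> Ax3 T -> 0 < al -> exists s, T (mdiag al (/ al) 1) = mdiag s (- s) 0.
Proof.
  intros H02 H03 H3 hal.
  assert (hial : 0 < / al) by (apply Rinv_0_lt_compat; lra).
  assert (hD : is_psym (mdiag al (/ al) 1)) by (apply psym_mdiag; lra).
  destruct (T_mdiag_diagonal T al (/ al) 1 H03 hal hial Rlt_0_1) as [x [y [z HT]]].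
  (* [D^-1] is [D] with the first two axes swapped, and [T D + T D^-1 = T 1 = 0] *)
  assert (HTinv : T (mdiag (/ al) al 1) = mdiag y x z).
  { rewrite <- (mconj_swap01_mdiag x y z), <- HT, <- (mconj_swap01_mdiag al (/ al) 1).
    apply H03; [exact swap01_orth | exact hD]. }
  assert (Hsum : madd (mdiag x y z) (mdiag y x z) = mzero).
  { rewrite <- HT, <- HTinv, <- H3, <- (T_mid T H02).
    - f_equal. rewrite mmul_mdiag, mid_mdiag. f_equal; field; lra.
    - exact hD.
    - apply psym_mdiag; lra.
    - apply coaxial_mdiag. }
  assert (Hy : y = - x) by (pose proof (f_equal (fun M => M I0 I0) Hsum); mat_unfold; lra).
  assert (Hz : z = 0) by (pose proof (f_equal (fun M => M I2 I2) Hsum); mat_unfold; lra).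
  exists x. rewrite HT, Hy, Hz. reflexivity.
Qed.

Lemma T_value_stretch_diagonal T U s :
  Ax0_2 T -> Ax0_3 T -> is_psym U -> T U = mdiag s (- s) 0 ->
  U = mdiag (U I0 I0) (U I1 I1) (U I2 I2).
Proof.
  intros H02 H03 hU HU. destruct (Req_dec s 0) as [-> | hs].
  - assert (U = mid) as -> by (apply H02; [exact hU | rewrite HU; mat_ext; mat_unfold; lra]).
    exact mid_mdiag.
  - apply (T_value_mdiag_distinct_diagonal T U s (- s) 0); try assumption; lra.
Qed.

Lemma Ax1_of_axioms T : Ax0_2 T -> Ax0_3 T -> Ax3 T -> Ax1 T.
Proof.
  intros H02 H03 H3 al hal.
  destruct (T_stretch T al H02 H03 H3 hal) as [s HT].
  set (D := mdiag al (/ al) 1) in HT.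
  assert (hD : is_psym D) by (apply psym_mdiag; [lra | apply Rinv_0_lt_compat; lra | lra]).
  exists s. intros U hU. split.
  - intros ->. exact HT.
  - intro HU.
    pose proof (T_value_stretch_diagonal T U s H02 H03 hU HU) as Udiag.
    pose proof (psym_diag_pos U I0 hU). pose proof (psym_diag_pos U I1 hU).
    pose proof (psym_diag_pos U I2 hU).
    set (W := mdiag (U I0 I0 / al) (U I1 I1 * al) (U I2 I2)).
    assert (hW : is_psym W)
      by (apply psym_mdiag; [apply Rdiv_lt_0_compat | apply Rmult_lt_0_compat | idtac]; lra).
    assert (EW : mmul W D = U).
    { rewrite Udiag at 1. unfold W, D. rewrite mmul_mdiag. f_equal; field; lra. }
    assert (W1 : W = mid).
    { apply (T_cancel T W D); try assumption; [apply coaxial_mdiag |].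
      rewrite EW, HU, HT. reflexivity. }
    rewrite <- EW, W1, mmul_1l. reflexivity.
Qed.

Theorem mainTheorem8 (T : Mat3 -> Mat3) :
  maps_into_sym T -> Ax0_1 T -> Ax0_2 T -> Ax0_3 T -> Ax3 T -> Ax1 T /\ Ax2 T.
Proof.
  intros _ _ H02 H03 H3. split; [apply Ax1_of_axioms | apply Ax2_of_axioms]; assumption.
Qed.
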